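(* Let $G=(V,E)$ be an undirected graph, $\vec{x}\in\mathbb{R}^n$ non-negative with $\|\vec{x}\|_1=1$, and $\delta\in(0,1)$. Consider any of the following choices of $(a,b,(w_i))$: (i) PageRank/Personalized PageRank: $a=0,b=1$, $w_i=\alpha(1-\alpha)^i$ with constant $\alpha\in(0,1)$; (ii) heat kernel PageRank: $a=0,b=1$, $w_i=e^{-t}t^i/i!$ with constant $t>0$; (iii) $k$-hop transition probability: $a=0,b=1$, $w_k=1$ and $w_i=0$ for $i\neq k$; (iv) Katz: $a=b=0$, $w_i=\beta^i$ with constant $0<\beta<1/\lambda_1$, where $\lambda_1$ is the largest eigenvalue of $\mathbf{A}$. Let $\mathbf{P}=\mathbf{D}^{-a}\mathbf{A}\mathbf{D}^{-b}$, $\vec{\pi}=\sum_{i=0}^\infty w_i\mathbf{P}^i\vec{x}$ and $\vec{\pi}_L=\sum_{i=0}^L w_i\mathbf{P}^i\vec{x}$. Then (without any further assumption on the weights) there is an integer $L$, with $L=O(\log(1/\delta))$ in cases (i), (ii), (iv) and any $L\ge k$ in case (iii), such that $\left\|\sum_{i=L+1}^\infty w_i\mathbf{P}^i\vec{x}\right\|_2\le\delta/19$, and consequently: if $\hat{\vec{\pi}}\in\mathbb{R}^n$ satisfies $|\vec{\pi}_L(v)-\hat{\vec{\pi}}(v)|\le\frac{1}{20}\vec{\pi}_L(v)$ for every $v$ with $\vec{\pi}_L(v)>\frac{18}{19}\delta$, then $|\vec{\pi}(v)-\hat{\vec{\pi}}(v)|\le\frac{1}{10}\vec{\pi}(v)$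 for every $v$ with $\vec{\pi}(v)\ge\delta$.
   Context: $G=(V,E)$ has $n$ nodes; $\mathbf{A}$ is its adjacency matrix and $\mathbf{D}$ the diagonal degree matrix with $\mathbf{D}(i,i)=\sum_j\mathbf{A}(i,j)$; $\mathbf{D}^{0}$ is the identity. *)

From HB Require Import structures.
From mathcomp Require Import all_boot all_order all_algebra.
From mathcomp Require Import all_classical all_reals all_analysis.
Set Implicit Arguments. Unset Strict Implicit. Unset Printing Implicit Defensive.
Import Order.TTheory GRing.Theory Num.Theory.
Local Open Scope ring_scope.

Section Defs.
Variables (R : realType) (n : nat).
Implicit Types (e : rel 'I_n) (w : nat -> R) (P : 'M[R]_n) (x : 'cV[R]_n).

Definition adjmx e : 'M[R]_n := \matrix_(i, j) (e i j)%:R.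

Definition degree e (i : 'I_n) : R := \sum_j adjmx e i j.

(* D^{-k} as a diagonal matrix; D^{-0} = identity.  Convention (mathcomp):
   0^-1 = 0, so an isolated vertex gets D^{-1}(i,i) = 0. *)
Definition Dinvpow e (k : nat) : 'M[R]_n :=
  diag_mx (\row_i (degree e i) ^- k).

Definition propmx e (a b : nat) : 'M[R]_n :=
  Dinvpow e a *m adjmx e *m Dinvpow e b.

Definition pterm w P x (i : nat) : 'cV[R]_n := w i *: (P ^+ i *m x).

Definition pi_inf w P x : 'cV[R]_n :=
  \col_v limn (fun N => \sum_(0 <= i < N) pterm w P x i v ord0).

Definition pi_L w P x (L : nat) : 'cV[R]_n :=
  \sum_(0 <= i < L.+1) pterm w P x i.

Definition pi_tail w P x (L : nat) : 'cV[R]_n :=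
  \col_v limn (fun N => \sum_(L.+1 <= i < N) pterm w P x i v ord0).

Definition norm2 (y : 'cV[R]_n) : R := Num.sqrt (\sum_v (y v ord0) ^+ 2).

Definition prob_vec x : Prop :=
  (forall v, 0 <= x v ord0) /\ \sum_v `|x v ord0| = 1.

Definition lemmaC3_concl w P x (delta : R) (L : nat) : Prop :=
  norm2 (pi_tail w P x L) <= delta / 19 /\
  forall pihat : 'cV[R]_n,
    (forall v, 18 / 19 * delta < pi_L w P x L v ord0 ->
       `|pi_L w P x L v ord0 - pihat v ord0| <= pi_L w P x L v ord0 / 20) ->
    forall v, delta <= pi_inf w P x v ord0 ->
       `|pi_inf w P x v ord0 - pihat v ord0| <= pi_inf w P x v ord0 / 10.

End Defs.

Definition w_pagerank (R : realType) (alpha : R) (i : nat) : R :=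
  alpha * (1 - alpha) ^+ i.
Definition w_heat (R : realType) (t : R) (i : nat) : R :=
  expR (- t) * t ^+ i / (i `!)%:R.
Definition w_hop (R : realType) (k : nat) (i : nat) : R := (i == k)%:R.
Definition w_katz (R : realType) (beta : R) (i : nat) : R := beta ^+ i.

(* Every term [w_i P^i x] is entrywise nonnegative, so the tail [pi - pi_L] is a
   nonnegative vector whose 2-norm and entries are bounded by its total mass
   [sum_(i > L) w_i |P^i x|_1]; a tail mass below [delta / 19] turns the 1/20
   relative error on [pi_L] into a 1/10 relative error on [pi].
   For [P = A D^-1] the columns sum to at most 1, so [|P^i x|_1 <= 1] and the
   tail mass is at most the tail of the weights: geometric for PageRank,
   geometric with ratio 1/2 beyond [2 t] for the heat kernel, zero beyond [k]
   for the k-hop probability.  For Katz, [P = A] is symmetric and nonnegative,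
   so its 2-norm is at most its largest eigenvalue [lambda1]: the supremum of
   the Rayleigh quotient is an eigenvalue, and nonnegativity bounds the quotient
   from below by minus that supremum.  Hence [|A^i x|_1 <= n lambda1^i].
   A geometric tail [K q^(L+1) / (1 - q)] falls below [delta / 19] for some
   [L = O(log (1 / delta))]. *)

From HB Require Import structures.
From mathcomp Require Import all_boot all_order all_algebra.
From mathcomp Require Import all_classical all_reals all_analysis.
From mathcomp Require Import ring lra.
Import Order.TTheory GRing.Theory Num.Theory.
Set Implicit Arguments. Unset Strict Implicit. Unset Printing Implicit Defensive.
Local Open Scope ring_scope.

Section QuadraticForm.
Variables (R : realFieldType) (n : nat).
Implicit Types (M : 'M[R]_n) (u v y : 'cV[R]_n).

Definition bform M u v : R := (u^T *m M *m v) ord0 ord0.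
Definition qform M y : R := bform M y y.
Definition sqnorm y : R := qform 1%:M y.
Definition l1mx M : R := \sum_i \sum_j `|M i j|.

Lemma bformDl M u1 u2 v : bform M (u1 + u2) v = bform M u1 v + bform M u2 v.
Proof. by rewrite /bform linearD !mulmxDl mxE. Qed.

Lemma bformDr M u v1 v2 : bform M u (v1 + v2) = bform M u v1 + bform M u v2.
Proof. by rewrite /bform mulmxDr mxE. Qed.

Lemma bformZl M a u v : bform M (a *: u) v = a * bform M u v.
Proof. by rewrite /bform linearZ /= -!scalemxAl mxE. Qed.

Lemma bformZr M a u v : bform M u (a *: v) = a * bform M u v.
Proof. by rewrite /bform -scalemxAr mxE. Qed.

Lemma bform_mulr M N u v : bform M u (N *m v) = bform (M *m N) u v.
Proof. by rewrite /bform !mulmxA. Qed.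

Lemma bform_sym M u v : M^T = M -> bform M u v = bform M v u.
Proof.
move=> MT; rewrite /bform -[u^T *m M *m v]trmxK [LHS]mxE.
by rewrite !trmx_mul trmxK MT mulmxA.
Qed.

Lemma qformD M u v : M^T = M ->
  qform M (u + v) = qform M u + 2 * bform M u v + qform M v.
Proof.
move=> MT; rewrite /qform !(bformDl, bformDr) (bform_sym _ _ MT); ring.
Qed.

Lemma qformZ M a y : qform M (a *: y) = a ^+ 2 * qform M y.
Proof. by rewrite /qform bformZl bformZr mulrA -expr2. Qed.

Lemma qform_add_scale M u v (t : R) : M^T = M ->
  qform M (u + t *: v) = qform M u + 2 * t * bform M u v + t ^+ 2 * qform M v.
Proof. by move=> MT; rewrite qformD // bformZr qformZ mulrA. Qed.

Lemma qformN M y : qform M (- y) = qform M y.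
Proof. by rewrite -scaleN1r qformZ sqrrN expr1n mul1r. Qed.

Lemma qformE M y : qform M y = \sum_i \sum_j y i ord0 * M i j * y j ord0.
Proof.
rewrite /qform /bform mxE exchange_big /=; apply: eq_bigr => j _.
by rewrite mxE mulr_suml; apply: eq_bigr => i _; rewrite !mxE.
Qed.

Lemma sqnormE y : sqnorm y = \sum_i y i ord0 ^+ 2.
Proof.
rewrite /sqnorm qformE; apply: eq_bigr => i _.
rewrite (bigD1 i) //= big1 => [|j /negPf ji]; rewrite mxE.
  by rewrite eqxx mulr1 addr0 expr2.
by rewrite eq_sym ji mulr0 mul0r.
Qed.

Lemma sqnorm_ge0 y : 0 <= sqnorm y.
Proof. by rewrite sqnormE sumr_ge0 // => i _; rewrite sqr_ge0. Qed.

Lemma sqr_entry_le_sqnorm y i : y i ord0 ^+ 2 <= sqnorm y.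
Proof.
by rewrite sqnormE (bigD1 i) //= lerDl sumr_ge0 // => j _; rewrite sqr_ge0.
Qed.

Lemma sqnorm_mul M y : sqnorm (M *m y) = qform (M^T *m M) y.
Proof. by rewrite /sqnorm /qform /bform trmx_mul mulmx1 !mulmxA. Qed.

Lemma bform_mul_sqnorm M y : M^T = M -> bform M y (M *m y) = sqnorm (M *m y).
Proof. by move=> MT; rewrite sqnorm_mul MT bform_mulr. Qed.

Lemma bform1_mul M y : bform 1%:M y (M *m y) = qform M y.
Proof. by rewrite bform_mulr mul1mx. Qed.

Lemma normM_entries_le_sqnorm y i j : `|y i ord0| * `|y j ord0| <= sqnorm y.
Proof.
have [yi yj] := (sqr_entry_le_sqnorm y i, sqr_entry_le_sqnorm y j).
have [|] := leP `|y i ord0| `|y j ord0| => [le_ij | /ltW le_ji].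
  by apply: le_trans yj; rewrite -real_normK ?num_real // expr2 ler_wpM2r.
by apply: le_trans yi; rewrite -real_normK ?num_real // expr2 ler_wpM2l.
Qed.

Lemma l1mx_ge0 M : 0 <= l1mx M.
Proof. by rewrite sumr_ge0 // => i _; rewrite sumr_ge0. Qed.

Lemma qform_abs_le M y : `|qform M y| <= l1mx M * sqnorm y.
Proof.
rewrite qformE /l1mx mulr_suml; apply: le_trans (ler_norm_sum _ _ _) _.
apply: ler_sum => i _; rewrite mulr_suml; apply: le_trans (ler_norm_sum _ _ _) _.
apply: ler_sum => j _; rewrite !normrM mulrAC mulrC ler_wpM2l //.
exact: normM_entries_le_sqnorm.
Qed.

Lemma sqnorm_mul_le M y : sqnorm (M *m y) <= l1mx (M^T *m M) * sqnorm y.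
Proof. by rewrite sqnorm_mul; apply: le_trans (ler_norm _) (qform_abs_le _ _). Qed.

Lemma sqnorm_abs y : sqnorm (map_mx Num.norm y) = sqnorm y.
Proof.
by rewrite !sqnormE; apply: eq_bigr => i _; rewrite mxE real_normK ?num_real.
Qed.

Lemma qform_abs_le_abs M y : (forall i j, 0 <= M i j) ->
  `|qform M y| <= qform M (map_mx Num.norm y).
Proof.
move=> M_ge0; rewrite !qformE; apply: le_trans (ler_norm_sum _ _ _) _.
apply: ler_sum => i _; apply: le_trans (ler_norm_sum _ _ _) _.
by apply: ler_sum => j _; rewrite !mxE !normrM (ger0_norm (M_ge0 i j)).
Qed.

Lemma qform_scalar_sub M a y : qform (a%:M - M) y = a * sqnorm y - qform M y.
Proof.
rewrite /sqnorm /qform /bform mulmxBr mulmxBl mul_mx_scalar mulmx1.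
by rewrite -scalemxAl !mxE.
Qed.

End QuadraticForm.

Section SymmetricForm.
Variables (R : realFieldType) (n : nat) (M : 'M[R]_n).
Hypothesis M_sym : M^T = M.

Lemma psd_sqnorm_mul_le (B : R) y : 0 < B ->
  (forall v, 0 <= qform M v) -> (forall v, qform M v <= B * sqnorm v) ->
  sqnorm (M *m y) <= B * qform M y.
Proof.
move=> B_gt0 psd le_B.
have := psd (y + (- B^-1) *: (M *m y)).
rewrite qform_add_scale // bform_mul_sqnorm // sqrrN.
set s := sqnorm _; set c := qform M y; set a := qform M _ => ge0.
have a_le : B^-1 ^+ 2 * a <= B^-1 * s.
  rewrite expr2 -mulrA; apply: ler_wpM2l; first by rewrite invr_ge0 ltW.
  by rewrite ler_pdivrMl // le_B.
have : B^-1 * s <= c by lra.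
by rewrite ler_pdivrMl.
Qed.

(* Bound the form from above at [c y + M y] and from below at [c y - M y]: the
   two values differ by [4 c |M y|^2]. *)
Lemma sym_sqnorm_mul_le (c : R) y : 0 < c ->
  (forall v, `|qform M v| <= c * sqnorm v) ->
  sqnorm (M *m y) <= c ^+ 2 * sqnorm y.
Proof.
move=> c_gt0 le_c.
have /ler_normlP[_ up] := le_c (c *: y + 1 *: (M *m y)).
have /ler_normlP[lo _] := le_c (c *: y + (- 1) *: (M *m y)).
move: up lo; rewrite /sqnorm !qform_add_scale ?trmx1 // !bformZl !qformZ.
rewrite bform_mul_sqnorm // bform1_mul -/(sqnorm (M *m y)) -/(sqnorm y).
set q := qform M y; set r := qform M (M *m y).
set s := sqnorm (M *m y); set u := sqnorm y => up lo.
have : c * s <= c * (c ^+ 2 * u) by lra.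
by rewrite ler_pM2l.
Qed.

End SymmetricForm.

Section Rayleigh.
Local Open Scope classical_set_scope.
Variables (R : realType) (n : nat) (M : 'M[R]_n).
Hypotheses (M_sym : M^T = M) (n_gt0 : (0 < n)%N).

Definition rayleigh_sup : R := sup [set qform M y | y in [set y | sqnorm y = 1]].

Lemma rayleigh_has_sup : has_sup [set qform M y | y in [set y | sqnorm y = 1]].
Proof.
split.
  pose e0 : 'cV[R]_n := delta_mx (Ordinal n_gt0) 0.
  exists (qform M e0); exists e0 => //=.
  rewrite sqnormE (bigD1 (Ordinal n_gt0)) //= big1 => [|i /negPf i_ne].
    by rewrite mxE !eqxx expr1n addr0.
  by rewrite mxE i_ne expr0n.
exists (l1mx M) => _ [y /= y1 <-].
by apply: le_trans (ler_norm _) _; rewrite -[leRHS]mulr1 -y1 qform_abs_le.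
Qed.

Lemma qform_le_rayleigh_sup y : qform M y <= rayleigh_sup * sqnorm y.
Proof.
have [y0 | y_ne0] := eqVneq (sqnorm y) 0.
  apply: le_trans (ler_norm _) _.
  by rewrite y0 mulr0 -(mulr0 (l1mx M)) -y0 qform_abs_le.
have y_gt0 : 0 < sqnorm y by rewrite lt_def y_ne0 sqnorm_ge0.
set s := Num.sqrt (sqnorm y).
have s_gt0 : 0 < s by rewrite sqrtr_gt0.
have s2 : s ^+ 2 = sqnorm y by rewrite sqr_sqrtr // sqnorm_ge0.
have unit_y : sqnorm (s^-1 *: y) = 1.
  by rewrite /sqnorm qformZ -/(sqnorm y) -s2 exprVn mulVf // expf_neq0 // gt_eqF.
have := sup_upper_bound rayleigh_has_sup (ex_intro2 _ _ _ unit_y erefl).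
by rewrite qformZ exprVn s2 mulrC ler_pdivrMr.
Qed.

Lemma rayleigh_sup_eigenvalue : eigenvalue M rayleigh_sup.
Proof.
set lam := rayleigh_sup; set N := lam%:M - M.
(* If [N] were invertible, [|y|^2 <= K * qform N y] for every [y], which fails
   for the near-maximisers of the Rayleigh quotient. *)
apply: contraT => not_eig.
have Q_unit : M - lam%:M \in unitmx.
  by rewrite -row_free_unit -kermx_eq0 -[_ == 0]negbK.
have N_sym : N^T = N by rewrite /N linearB /= M_sym tr_scalar_mx.
have N_psd v : 0 <= qform N v.
  by rewrite qform_scalar_sub subr_ge0 qform_le_rayleigh_sup.
set B := l1mx N + 1.
have B_gt0 : 0 < B by rewrite ltr_wpDl ?l1mx_ge0.
have N_le v : qform N v <= B * sqnorm v.
  apply: le_trans (ler_norm _) _; apply: le_trans (qform_abs_le _ _) _.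
  by rewrite ler_wpM2r ?sqnorm_ge0 // lerDl.
set Qi := invmx (M - lam%:M); set K := l1mx (Qi^T *m Qi) * B.
have K_ge0 : 0 <= K by rewrite mulr_ge0 ?l1mx_ge0 // ltW.
have sqnorm_le y : sqnorm y <= K * qform N y.
  rewrite -{1}(mulKmx Q_unit y) -mulrA; apply: le_trans (sqnorm_mul_le _ _) _.
  rewrite ler_wpM2l ?l1mx_ge0 //.
  have -> : (M - lam%:M) *m y = - (N *m y) by rewrite /N -mulNmx opprB.
  by rewrite /sqnorm qformN psd_sqnorm_mul_le.
have eps_gt0 : 0 < (K + 1)^-1 by rewrite invr_gt0; lra.
have [_ [y /= y1 <-]] := sup_adherent eps_gt0 rayleigh_has_sup.
rewrite -/rayleigh_sup -/lam => lam_lt.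
have := sqnorm_le y; rewrite qform_scalar_sub y1 mulr1.
have : K * (lam - qform M y) <= K / (K + 1) by apply: ler_wpM2l => //; lra.
have : K / (K + 1) < 1 by rewrite ltr_pdivrMr; lra.
lra.
Qed.

End Rayleigh.

Lemma nonneg_sym_sqnorm_mul_le (R : realType) n (A : 'M[R]_n) (c : R) :
  A^T = A -> (forall i j, 0 <= A i j) -> (forall mu, eigenvalue A mu -> mu <= c) ->
  0 < c -> forall y, sqnorm (A *m y) <= c ^+ 2 * sqnorm y.
Proof.
case: n A => [|n] A A_sym A_ge0 eig_le c_gt0 y.
  by rewrite !sqnormE !big_ord0 mulr0.
apply: sym_sqnorm_mul_le => // v.
apply: le_trans (qform_abs_le_abs _ A_ge0) _.
apply: le_trans (qform_le_rayleigh_sup _ (ltn0Sn n) _) _.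
by rewrite sqnorm_abs ler_wpM2r ?sqnorm_ge0 // eig_le // rayleigh_sup_eigenvalue.
Qed.

Section Tail.
Local Open Scope classical_set_scope.
Variables (R : realType) (n : nat) (w : nat -> R) (P : 'M[R]_n) (x : 'cV[R]_n).
Variables (L : nat) (T : R).
Hypothesis pterm_ge0 : forall i v, 0 <= pterm w P x i v ord0.
Hypothesis tail_mass_le :
  forall N, \sum_(L.+1 <= i < N) \sum_v pterm w P x i v ord0 <= T.

Let tail_partial v N := \sum_(L.+1 <= i < N) pterm w P x i v ord0.

Let tail_partial_ge0 v N : 0 <= tail_partial v N.
Proof. exact: sumr_ge0. Qed.

Let tail_partial_le v N : tail_partial v N <= T.
Proof.
apply: le_trans (tail_mass_le N); rewrite /tail_partial exchange_big /=.
by rewrite (bigD1 v) //= lerDl sumr_ge0 // => u _; rewrite sumr_ge0.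
Qed.

Let tail_partial_cvg v : cvgn (tail_partial v).
Proof.
apply: nondecreasing_is_cvgn; last by exists T => _ [N _ <-]; apply: tail_partial_le.
apply/nondecreasing_seqP => N; rewrite /tail_partial.
have [LN | NL] := leqP L.+1 N; first by rewrite big_nat_recr //= lerDl.
by rewrite [leLHS]big_geq ?sumr_ge0 // ltnW.
Qed.

Let pi_tailE v : pi_tail w P x L v ord0 = limn (tail_partial v).
Proof. by rewrite mxE. Qed.

Lemma pi_tail_ge0 v : 0 <= pi_tail w P x L v ord0.
Proof.
rewrite pi_tailE; apply: limr_ge => //; near=> N; apply: tail_partial_ge0.
Unshelve. all: by end_near.
Qed.

Lemma pi_tail_mass_le : \sum_v pi_tail w P x L v ord0 <= T.
Proof.
under eq_bigr do rewrite pi_tailE.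
have cv : (fun N => \sum_v tail_partial v N) @ \oo --> \sum_v limn (tail_partial v).
  by apply: (cvg_big (P := xpredT)) => //; exact: add_continuous.
rewrite -(cvg_lim _ cv) //; apply: limr_le; first exact: cvgP cv.
by near=> N; rewrite /tail_partial exchange_big.
Unshelve. all: by end_near.
Qed.

Lemma pi_infE v :
  pi_inf w P x v ord0 = pi_L w P x L v ord0 + pi_tail w P x L v ord0.
Proof.
rewrite pi_tailE mxE.
have cv : (fun N => \sum_(0 <= i < N) pterm w P x i v ord0) @ \oo -->
    pi_L w P x L v ord0 + limn (tail_partial v).
  have split_sum : \forall N \near \oo,
      pi_L w P x L v ord0 + tail_partial v N = \sum_(0 <= i < N) pterm w P x i v ord0.
    near=> N.
    have LN : (L.+1 <= N)%N by near: N; exact: nbhs_infty_ge.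
    by rewrite /pi_L summxE (big_cat_nat (leq0n L.+1) LN).
  apply: cvg_trans (near_eq_cvg split_sum) _.
  by apply: cvgD; [exact: cvg_cst | exact: tail_partial_cvg].
exact: cvg_lim cv.
Unshelve. all: by end_near.
Qed.

End Tail.

Lemma norm2_le_sum_abs (R : realType) n (y : 'cV[R]_n) :
  norm2 y <= \sum_v `|y v ord0|.
Proof.
have sum_ge0 : 0 <= \sum_v `|y v ord0| by rewrite sumr_ge0.
rewrite /norm2 -(ger0_norm sum_ge0) -sqrtr_sqr ler_sqrt ?sqr_ge0 //.
rewrite expr2 mulr_suml; apply: ler_sum => v _.
rewrite -real_normK ?num_real // expr2 ler_wpM2l //.
by rewrite (bigD1 v) //= lerDl sumr_ge0.
Qed.

Lemma relative_error_transfer (R : realFieldType) (delta p q t h : R) :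
  p = q + t -> 0 <= t < delta / 19 -> delta <= p ->
  (18 / 19 * delta < q -> `|q - h| <= q / 20) -> `|p - h| <= p / 10.
Proof.
move=> -> /andP[t_ge0 t_lt] p_ge le_q.
have /le_q/ler_normlP[q_lo q_hi] : 18 / 19 * delta < q by lra.
by apply/ler_normlP; split; lra.
Qed.

Lemma lemmaC3_concl_of_tail_mass (R : realType) n (w : nat -> R) (P : 'M[R]_n)
    (x : 'cV[R]_n) (delta T : R) (L : nat) :
  (forall i v, 0 <= pterm w P x i v ord0) ->
  (forall N, \sum_(L.+1 <= i < N) \sum_v pterm w P x i v ord0 <= T) ->
  T < delta / 19 -> lemmaC3_concl w P x delta L.
Proof.
move=> terms_ge0 tail_le T_lt.
have tail_ge0 := pi_tail_ge0 terms_ge0 tail_le.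
have mass_le := pi_tail_mass_le terms_ge0 tail_le.
split.
  apply: le_trans (norm2_le_sum_abs _) _; apply: ltW; apply: le_lt_trans T_lt.
  by rewrite (eq_bigr _ (fun v _ => ger0_norm (tail_ge0 v))).
move=> pihat approx v le_pi.
apply: relative_error_transfer le_pi (approx v); first exact: pi_infE.
rewrite tail_ge0 (le_lt_trans _ T_lt) //; apply: le_trans mass_le.
by rewrite (bigD1 v) //= lerDl sumr_ge0.
Qed.

Lemma geometric_tail_le (R : realFieldType) (q : R) (a N : nat) : 0 <= q < 1 ->
  \sum_(a <= i < N) q ^+ i <= q ^+ a / (1 - q).
Proof.
move=> /andP[q_ge0 q_lt1]; have q_gt : 0 < 1 - q by rewrite subr_gt0.
have [aN | Na] := leqP a N; last first.
  by rewrite big_geq ?(ltnW Na) // divr_ge0 ?exprn_ge0 // ltW.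
rewrite -(subnKC aN) geometric_partial_tail geometric_seriesE ?lt_eqF //=.
rewrite ler_pM2r ?invr_gt0 // ler_piMr ?exprn_ge0 //.
by rewrite lerBlDr lerDl exprn_ge0.
Qed.

Lemma expr_lt_of_ln (R : realType) (q eps : R) (k : nat) : 0 < q -> 0 < eps ->
  ln (eps^-1) < k%:R * ln (q^-1) -> q ^+ k < eps.
Proof.
move=> q_gt0 eps_gt0; rewrite !lnV ?posrE // => lt_ln.
by rewrite -ltr_ln ?posrE ?exprn_gt0 // lnXn // -mulr_natl; lra.
Qed.

Lemma log_tail_index (R : realType) (K q : R) (m : nat) : 0 < K -> 0 < q < 1 ->
  exists2 C : R, 0 < C & forall delta : R, 0 < delta < 1 ->
  exists L : nat, [/\ (m <= L)%N, L%:R <= C * (1 + ln (delta^-1))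
                    & K * (q ^+ L.+1 / (1 - q)) < delta / 19].
Proof.
move=> K_gt0 /andP[q_gt0 q_lt1]; have q'_gt0 : 0 < 1 - q by rewrite subr_gt0.
set c := ln q^-1; have c_gt0 : 0 < c by rewrite ln_gt0 // invf_gt1.
set A := ln (19 * K / (1 - q)); set Z := (`|A| + 1) / c.
have Z_gt0 : 0 < Z by rewrite divr_gt0 // ltr_wpDl.
exists (m%:R + Z); first by rewrite ltr_wpDl ?ler0n.
move=> delta /andP[d_gt0 d_lt1].
set l := ln delta^-1; have l_ge0 : 0 <= l by rewrite ln_ge0 // invf_ge1 // ltW.
set y := (`|A| + l) / c.
have y_ge0 : 0 <= y by rewrite divr_ge0 ?addr_ge0 // ltW.
have /andP[floor_le lt_ceil] := truncn_itv y_ge0.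
exists (m + Num.truncn y)%N; split; first exact: leq_addr.
  have y_le : y <= Z * (1 + l).
    rewrite /y /Z mulrAC; apply: ler_wpM2r; first by rewrite invr_ge0 ltW.
    by have := mulr_ge0 (normr_ge0 A) l_ge0; lra.
  by have := mulr_ge0 (ler0n R m) l_ge0; rewrite natrD; lra.
set eps := delta * (1 - q) / (19 * K).
have eps_gt0 : 0 < eps by rewrite !divr_gt0 ?mulr_gt0.
suff q_lt : q ^+ (m + Num.truncn y).+1 < eps.
  have -> : delta / 19 = K * (eps / (1 - q)).
    by rewrite /eps; field; rewrite !gt_eqF.
  by rewrite ltr_pM2l // ltr_pM2r ?invr_gt0.
apply: expr_lt_of_ln => //.
have -> : eps^-1 = (19 * K / (1 - q)) * delta^-1.
  by rewrite /eps; field; rewrite !gt_eqF.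
rewrite lnM ?posrE ?invr_gt0 ?divr_gt0 ?mulr_gt0 // -/A -/l -/c.
have yc : y * c = `|A| + l by rewrite /y divfK ?gt_eqF.
have : y * c < (m + Num.truncn y).+1%:R * c.
  by rewrite ltr_pM2r //; apply: lt_le_trans lt_ceil _; rewrite ler_nat ltnS leq_addl.
by have := ler_norm A; lra.
Qed.

Section NonnegativeIteration.
Variables (R : realFieldType) (n : nat) (M : 'M[R]_n) (y : 'cV[R]_n).
Hypotheses (M_ge0 : forall i j, 0 <= M i j) (y_ge0 : forall v, 0 <= y v ord0).

Lemma exprmx_mul_ge0 k v : 0 <= (M ^+ k *m y) v ord0.
Proof.
elim: k v => [|k IHk] v; first by rewrite expr0 mul1mx.
by rewrite exprS -mulmxE -mulmxA mxE sumr_ge0 // => j _; rewrite mulr_ge0.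
Qed.

Hypothesis M_colsum_le1 : forall j, \sum_i M i j <= 1.

Lemma exprmx_mass_le k : \sum_v (M ^+ k *m y) v ord0 <= \sum_v y v ord0.
Proof.
elim: k => [|k IHk]; first by rewrite expr0 mul1mx.
apply: le_trans IHk; rewrite exprS -mulmxE -mulmxA.
under eq_bigr do rewrite mxE.
rewrite exchange_big /=; apply: ler_sum => j _.
by rewrite -mulr_suml ler_piMl ?exprmx_mul_ge0.
Qed.

End NonnegativeIteration.

Lemma pterm_ge0 (R : realType) n (w : nat -> R) (P : 'M[R]_n) (x : 'cV[R]_n) i v :
  0 <= w i -> (forall i j, 0 <= P i j) -> (forall v, 0 <= x v ord0) ->
  0 <= pterm w P x i v ord0.
Proof. by move=> w_ge0 P_ge0 x_ge0; rewrite mxE mulr_ge0 ?exprmx_mul_ge0. Qed.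

Lemma pterm_mass (R : realType) n (w : nat -> R) (P : 'M[R]_n) (x : 'cV[R]_n) i :
  \sum_v pterm w P x i v ord0 = w i * \sum_v (P ^+ i *m x) v ord0.
Proof. by rewrite mulr_sumr; apply: eq_bigr => v _; rewrite mxE. Qed.

Lemma prob_vec_sum (R : realType) n (x : 'cV[R]_n) :
  prob_vec x -> \sum_v x v ord0 = 1.
Proof. by case=> x_ge0 <-; apply: eq_bigr => v _; rewrite ger0_norm. Qed.

Lemma prob_vec_sqnorm_le1 (R : realType) n (x : 'cV[R]_n) :
  prob_vec x -> sqnorm x <= 1.
Proof.
move=> px; have [x_ge0 _] := px; rewrite -(prob_vec_sum px) sqnormE.
apply: ler_sum => v _; rewrite expr2 ler_piMl //.
by rewrite -(prob_vec_sum px) (bigD1 v) //= lerDl sumr_ge0.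
Qed.

Section PropagationMatrices.
Variables (R : realType) (n : nat) (e : rel 'I_n).
Hypothesis e_sym : symmetric e.

Lemma adjmx_ge0 i j : 0 <= adjmx R e i j.
Proof. by rewrite mxE ler0n. Qed.

Lemma adjmx_sym : (adjmx R e)^T = adjmx R e.
Proof. by apply/matrixP => i j; rewrite !mxE e_sym. Qed.

Lemma propmx00E : propmx R e 0 0 = adjmx R e.
Proof.
apply/matrixP => i j.
by rewrite /propmx /Dinvpow mul_mx_diag mul_diag_mx !mxE expr0 invr1 mul1r mulr1.
Qed.

Lemma propmx01E i j : propmx R e 0 1 i j = adjmx R e i j / degree R e j.
Proof.
by rewrite /propmx /Dinvpow mul_mx_diag mul_diag_mx !mxE expr0 invr1 mul1r expr1.
Qed.

Lemma propmx01_ge0 i j : 0 <= propmx R e 0 1 i j.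
Proof.
rewrite propmx01E mulr_ge0 ?adjmx_ge0 // invr_ge0 sumr_ge0 // => k _.
exact: adjmx_ge0.
Qed.

Lemma propmx01_colsum_le1 j : \sum_i propmx R e 0 1 i j <= 1.
Proof.
under eq_bigr do rewrite propmx01E.
rewrite -mulr_suml.
have -> : \sum_i adjmx R e i j = degree R e j.
  by apply: eq_bigr => i _; rewrite !mxE e_sym.
by have [->|deg_ne0] := eqVneq (degree R e j) 0; rewrite ?mul0r ?mulfV.
Qed.

End PropagationMatrices.

Section RandomWalkTerms.
Variables (R : realType) (n : nat) (e : rel 'I_n) (x : 'cV[R]_n) (w : nat -> R).
Hypotheses (e_sym : symmetric e) (x_prob : prob_vec x) (w_ge0 : forall i, 0 <= w i).

Lemma propmx01_pterm_ge0 i v : 0 <= pterm w (propmx R e 0 1) x i v ord0.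
Proof. by rewrite pterm_ge0 //; [exact: propmx01_ge0 | case: x_prob]. Qed.

Lemma propmx01_pterm_mass_le i : \sum_v pterm w (propmx R e 0 1) x i v ord0 <= w i.
Proof.
rewrite pterm_mass -[leRHS]mulr1 ler_wpM2l // -(prob_vec_sum x_prob).
apply: exprmx_mass_le; first exact: propmx01_ge0.
  by case: x_prob.
exact: propmx01_colsum_le1.
Qed.

End RandomWalkTerms.

Lemma ratio_le_geometric (R : realFieldType) (u : nat -> R) (r : R) (m : nat) :
  0 < r -> (forall k, (m <= k)%N -> u k.+1 <= r * u k) ->
  forall i, (m <= i)%N -> u i <= u m / r ^+ m * r ^+ i.
Proof.
move=> r_gt0 ratio_le i /subnKC <-; rewrite exprD mulrA divfK ?expf_neq0 ?gt_eqF //.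
elim: (i - m)%N => [|j IHj]; first by rewrite expr0 mulr1 addn0.
rewrite addnS exprS mulrCA; apply: le_trans (ratio_le _ (leq_addr _ _)) _.
by rewrite ler_pM2l.
Qed.

Lemma w_heat_gt0 (R : realType) (t : R) i : 0 < t -> 0 < w_heat t i.
Proof.
by move=> t_gt0; rewrite divr_gt0 ?mulr_gt0 ?expR_gt0 ?exprn_gt0 ?ltr0n ?fact_gt0.
Qed.

Lemma w_heatS (R : realType) (t : R) k : w_heat t k.+1 = t / k.+1%:R * w_heat t k.
Proof.
rewrite /w_heat factS natrM exprS.
have fact_ne0 : (k`!)%:R != 0 :> R by rewrite pnatr_eq0 -lt0n fact_gt0.
by field; rewrite fact_ne0 addrC natr1 pnatr_eq0.
Qed.

Lemma w_heat_geometric (R : realType) (t : R) : 0 < t ->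
  exists m, exists2 K, 0 < K & forall i, (m <= i)%N -> w_heat t i <= K * 2^-1 ^+ i.
Proof.
(* Beyond [2 t] consecutive weights shrink by the factor [t / (k + 1) <= 1/2]. *)
move=> t_gt0; set m := (Num.truncn (2 * t)).+1.
have t_lt : 2 * t < m%:R by rewrite truncnS_gt.
exists m, (w_heat t m / 2^-1 ^+ m); first by rewrite divr_gt0 ?w_heat_gt0 ?exprn_gt0.
apply: ratio_le_geometric => // k mk; rewrite w_heatS.
apply: ler_wpM2r; first exact/ltW/w_heat_gt0.
have : m%:R <= k.+1%:R :> R by rewrite ler_nat ltnW.
by rewrite ler_pdivrMr ?ltr0n //; lra.
Qed.

Section KatzTerms.
Variables (R : realType) (n : nat) (e : rel 'I_n) (x : 'cV[R]_n) (lambda1 : R).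
Hypotheses (e_sym : symmetric e) (x_prob : prob_vec x).
Hypotheses (lambda1_ub : forall mu, eigenvalue (adjmx R e) mu -> mu <= lambda1).
Hypothesis lambda1_gt0 : 0 < lambda1.

Lemma adjmx_pow_sqnorm_le k : sqnorm (adjmx R e ^+ k *m x) <= (lambda1 ^+ k) ^+ 2.
Proof.
rewrite -exprM mulnC exprM -[leRHS]mulr1.
apply: le_trans (_ : _ <= (lambda1 ^+ 2) ^+ k * sqnorm x) _; last first.
  by rewrite ler_pM2l ?exprn_gt0 ?prob_vec_sqnorm_le1.
elim: k => [|k IHk]; first by rewrite expr0 mul1mx mul1r.
rewrite exprS -mulmxE -mulmxA exprS -mulrA.
apply: le_trans (nonneg_sym_sqnorm_mul_le (adjmx_sym R e_sym) (@adjmx_ge0 _ _ e)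
  lambda1_ub lambda1_gt0 _) _.
by rewrite ler_pM2l ?exprn_gt0.
Qed.

Lemma adjmx_pow_mass_le k : \sum_v (adjmx R e ^+ k *m x) v ord0 <= n%:R * lambda1 ^+ k.
Proof.
have [x_ge0 _] := x_prob.
rewrite mulr_natl -[n in _ *+ n]card_ord -sumr_const; apply: ler_sum => v _.
rewrite -ler_sqr ?nnegrE ?exprn_ge0 ?(ltW lambda1_gt0) ?exprmx_mul_ge0 //.
  exact: le_trans (sqr_entry_le_sqnorm _ v) (adjmx_pow_sqnorm_le k).
exact: adjmx_ge0.
Qed.

End KatzTerms.

Lemma lemmaC3_concl_geometric (R : realType) (K q : R) (m : nat) :
  0 < K -> 0 < q < 1 ->
  exists2 C : R, 0 < C & forall n (w : nat -> R) (P : 'M[R]_n) (x : 'cV[R]_n) delta,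
    (forall i v, 0 <= pterm w P x i v ord0) ->
    (forall i, (m <= i)%N -> \sum_v pterm w P x i v ord0 <= K * q ^+ i) ->
    0 < delta < 1 ->
    exists L : nat, L%:R <= C * (1 + ln (delta^-1)) /\ lemmaC3_concl w P x delta L.
Proof.
move=> K_gt0 q01; have [C C_gt0 index] := log_tail_index m K_gt0 q01.
exists C => // n w P x delta terms_ge0 mass_le delta01.
have [L [mL LC tail_lt]] := index _ delta01.
exists L; split => //; apply: lemmaC3_concl_of_tail_mass terms_ge0 _ tail_lt => N.
apply: le_trans (_ : \sum_(L.+1 <= i < N) K * q ^+ i <= _).
  by apply: ler_sum_nat => i /andP[Li _]; apply/mass_le/(leq_trans mL)/ltnW.
have /andP[q_gt0 q_lt1] := q01.
by rewrite -mulr_sumr ler_pM2l // geometric_tail_le // ltW.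
Qed.

Lemma lemmaC3_random_walk (R : realType) (w : nat -> R) (K q : R) (m : nat) :
  0 < K -> 0 < q < 1 -> (forall i, 0 <= w i) ->
  (forall i, (m <= i)%N -> w i <= K * q ^+ i) ->
  exists C : R, 0 < C /\
    forall (n : nat) (e : rel 'I_n) (x : 'cV[R]_n) (delta : R),
      symmetric e -> prob_vec x -> 0 < delta < 1 ->
      exists L : nat, L%:R <= C * (1 + ln (delta^-1)) /\
        lemmaC3_concl w (propmx R e 0 1) x delta L.
Proof.
move=> K_gt0 q01 w_ge0 w_le.
have [C C_gt0 geo] := lemmaC3_concl_geometric m K_gt0 q01.
exists C; split => // n e x delta e_sym x_prob delta01.
apply: geo delta01 => [i v | i mi]; first exact: propmx01_pterm_ge0.
exact: le_trans (propmx01_pterm_mass_le _ _ _ _) (w_le i mi).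
Qed.

Lemma lemmaC3_hop (R : realType) (k n : nat) (e : rel 'I_n) (x : 'cV[R]_n)
    (delta : R) (L : nat) :
  symmetric e -> prob_vec x -> 0 < delta -> (k <= L)%N ->
  lemmaC3_concl (w_hop R k) (propmx R e 0 1) x delta L.
Proof.
move=> e_sym x_prob delta_gt0 kL.
have w_ge0 i : 0 <= w_hop R k i by rewrite ler0n.
apply: (lemmaC3_concl_of_tail_mass (T := 0)); last by rewrite divr_gt0.
  by move=> i v; apply: propmx01_pterm_ge0.
move=> N; rewrite big1_seq // => i /andP[_]; rewrite mem_index_iota => /andP[Li _].
rewrite big1 // => v _; rewrite mxE /w_hop.
by rewrite gtn_eqF ?mul0r // (leq_ltn_trans kL Li).
Qed.

Lemma lemmaC3_katz (R : realType) (n : nat) (e : rel 'I_n) (beta lambda1 : R) :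
  symmetric e -> (forall mu : R, eigenvalue (adjmx R e) mu -> mu <= lambda1) ->
  0 < beta -> beta < lambda1^-1 ->
  exists C : R, 0 < C /\
    forall (x : 'cV[R]_n) (delta : R), prob_vec x -> 0 < delta < 1 ->
      exists L : nat, L%:R <= C * (1 + ln (delta^-1)) /\
        lemmaC3_concl (w_katz beta) (propmx R e 0 0) x delta L.
Proof.
move=> e_sym lambda1_ub beta_gt0 beta_lt.
have lambda1_gt0 : 0 < lambda1 by rewrite -invr_gt0; apply: lt_trans beta_lt.
have q01 : 0 < beta * lambda1 < 1 by rewrite mulr_gt0 //= -ltr_pdivlMr // div1r.
(* [n + 1] rather than [n] keeps the constant positive when [n = 0]. *)
have K_gt0 : 0 < n%:R + 1 :> R by rewrite ltr_wpDl.
have [C C_gt0 geo] := lemmaC3_concl_geometric 0 K_gt0 q01.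
exists C; split => // x delta x_prob delta01.
have [x_ge0 _] := x_prob.
apply: geo delta01 => [i v | i _].
  rewrite propmx00E; apply: pterm_ge0 => //; last exact: adjmx_ge0.
  by rewrite exprn_ge0 // ltW.
rewrite propmx00E pterm_mass /w_katz exprMn mulrCA.
apply: ler_wpM2l; first by rewrite exprn_ge0 // ltW.
apply: le_trans (adjmx_pow_mass_le e_sym x_prob lambda1_ub lambda1_gt0 i) _.
by rewrite ler_pM2r ?exprn_gt0 // lerDl.
Qed.

Theorem lemmaC3 (R : realType) :
  (* (i) PageRank: a = 0, b = 1, w_i = alpha (1-alpha)^i *)
  (forall alpha : R, 0 < alpha < 1 ->
    exists C : R, 0 < C /\
    forall (n : nat) (e : rel 'I_n) (x : 'cV[R]_n) (delta : R),
      symmetric e -> prob_vec x -> 0 < delta < 1 ->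
      exists L : nat, L%:R <= C * (1 + ln (delta^-1)) /\
        lemmaC3_concl (w_pagerank alpha) (propmx R e 0 1) x delta L) /\
  (* (ii) heat kernel PageRank: a = 0, b = 1, w_i = e^{-t} t^i / i! *)
  (forall t : R, 0 < t ->
    exists C : R, 0 < C /\
    forall (n : nat) (e : rel 'I_n) (x : 'cV[R]_n) (delta : R),
      symmetric e -> prob_vec x -> 0 < delta < 1 ->
      exists L : nat, L%:R <= C * (1 + ln (delta^-1)) /\
        lemmaC3_concl (w_heat t) (propmx R e 0 1) x delta L) /\
  (* (iii) k-hop transition probability: a = 0, b = 1, w = indicator of k;
     any L >= k works *)
  (forall (k n : nat) (e : rel 'I_n) (x : 'cV[R]_n) (delta : R),
      symmetric e -> prob_vec x -> 0 < delta < 1 ->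
      forall L : nat, (k <= L)%N ->
        lemmaC3_concl (w_hop R k) (propmx R e 0 1) x delta L) /\
  (* (iv) Katz: a = b = 0, w_i = beta^i, 0 < beta < 1/lambda_1 *)
  (forall (n : nat) (e : rel 'I_n) (beta lambda1 : R),
      symmetric e ->
      eigenvalue (adjmx R e) lambda1 ->
      (forall mu : R, eigenvalue (adjmx R e) mu -> mu <= lambda1) ->
      0 < beta -> beta < lambda1^-1 ->
    exists C : R, 0 < C /\
    forall (x : 'cV[R]_n) (delta : R),
      prob_vec x -> 0 < delta < 1 ->
      exists L : nat, L%:R <= C * (1 + ln (delta^-1)) /\
        lemmaC3_concl (w_katz beta) (propmx R e 0 0) x delta L).
Proof.
split.
  move=> alpha /andP[alpha_gt0 alpha_lt1].
  apply: (lemmaC3_random_walk (m := 0) (q := 1 - alpha) alpha_gt0).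
  - by apply/andP; split; lra.
  - by move=> i; rewrite mulr_ge0 ?exprn_ge0 ?subr_ge0 // ltW.
  - by [].
split.
  move=> t t_gt0; have [m [K K_gt0 w_le]] := w_heat_geometric t_gt0.
  apply: (lemmaC3_random_walk K_gt0 _ _ w_le) => [|i].
    by apply/andP; split; lra.
  exact/ltW/w_heat_gt0.
split.
  by move=> k n e x delta e_sym x_prob /andP[delta_gt0 _] L; apply: lemmaC3_hop.
by move=> n e beta lambda1 e_sym _; apply: lemmaC3_katz.
Qed.
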